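(* Consider the following insertion-only procedure for maintaining a coloring of a set $S$ of objects, where $S$ is partitioned into sets $S_0,\ldots,S_\ell$, $\ell=\lceil\log n\rceil$, each in one of the states empty, full, or in migration, and where for each $i$ there are $\ell-i+1$ color sets $C(i,t)$, $0\le t\le \ell-i$, each of $\gamma_{\mathrm{um}}(2^i)$ colors. To insert an object $s$: (1) let $i$ be the smallest index with $S_i$ empty (if $i=\ell+1$ a new set is introduced and $\ell$ is redefined); (2) set $S_i:=\{s\}\cup S_0\cup\cdots\cup S_{i-1}$, mark $S_0,\ldots,S_{i-1}$ empty and $S_i$ in migration; (3) take an unused color set $C(i,t)$ and compute a unimax coloring of $S_i$ with it, whose colors are called final colors; only $s$ is given its final color now; (4) for each set $S_k$ in migration, recolor to its final color one object of $S_k$ whose current color differs from its final color and whose final color is maximal among such objects; if all objects of $S_k$ now have their final color, mark $S_k$ full. Then whenever an object is inserted and the first empty set is $S_i$, the sets $S_0,\ldots,S_{i-1}$ are full.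
   Context: Initially $S$ is empty and all sets are empty. A unimax coloring of a set of objects (regions with respect to points, or points with respect to ranges) is a coloring by integers such that for every point (resp. range) $q$ related to at least one object, the maximum color among the objects related to $q$ is attained by exactly one of them. $\gamma_{\mathrm{um}}$ is a non-decreasing function such that every $m$ objects of the family admit a unimax coloring with $\gamma_{\mathrm{um}}(m)$ colors. *)

From mathcomp Require Import all_boot.
Set Implicit Arguments. Unset Strict Implicit. Unset Printing Implicit Defensive.

Inductive status := Empty | Full | Migration.

Section Unimax.
Variables (T : eqType) (Q : Type) (rel : Q -> T -> bool).

Definition unimax (X : seq T) (f : T -> nat) : Prop :=
  forall q, has (rel q) X ->
  exists x, [/\ x \in X, rel q x,
     (forall y, y \in X -> rel q y -> f y <= f x) &
     (forall y, y \in X -> rel q y -> f y = f x -> y = x)].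

Definition gamma_um_bound (gamma : nat -> nat) : Prop :=
  forall X : seq T, uniq X ->
  exists f, unimax X f /\ size (undup (map f X)) <= gamma (size X).

Record config := Config {
  ell : nat;                 (* sets S_0, ..., S_ell exist *)
  sets : nat -> seq T;
  state : nat -> status;
  col : T -> nat;
  fcol : T -> nat
}.

Definition in_S (c : config) (x : T) : Prop :=
  exists k, k <= ell c /\ x \in sets c k.

Definition first_empty (c : config) (i : nat) : Prop :=
  [/\ i <= (ell c).+1, (i <= ell c -> state c i = Empty) &
      forall j, j < i -> state c j <> Empty].

(* step (4) for one set X in migration, from colours col to col' *)
Definition recolor_one (X : seq T) (col fcol col' : T -> nat) : Prop :=
  ((forall x, x \in X -> col x = fcol x) /\ (forall x, x \in X -> col' x = col x))
  \/ exists x, [/\ x \in X, col x <> fcol x,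
        (forall y, y \in X -> col y <> fcol y -> fcol y <= fcol x),
        col' x = fcol x &
        forall y, y \in X -> y <> x -> col' y = col y].

Variable C : nat -> nat -> seq nat.

Definition insert_step (c : config) (s : T) (c' : config) : Prop :=
  ~ in_S c s /\
  exists i ell' t (g : T -> nat) (col' : T -> nat),
    let Si := s :: flatten [seq sets c j | j <- iota 0 i] in
    let sets' := fun j => if j < i then [::] else if j == i then Si
                          else if j <= ell c then sets c j else [::] in
    let st1 := fun j => if j < i then Empty else if j == i then Migration
                        else if j <= ell c then state c j else Empty in
    let fcol1 := fun x => if x \in Si then g x else fcol c x in
    let col1 := fun x => if x == s then g s else col c x in
    let st' := fun j => match st1 j with
                        | Migration => if all (fun x => col' x == fcol1 x) (sets' j)
                                       then Full else Migration
                        | st => st end in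
    [/\ first_empty c i,
        (* (1) a new set is introduced and ell redefined if i = ell+1 *)
        (i <= ell c -> ell' = ell c) /\ (i = (ell c).+1 -> i <= ell'),
        (* (3) an unused colour set C(i,t), unimax colouring of S_i with it *)
        [/\ t <= ell' - i,
            (forall x, in_S c x -> col c x \notin C i t),
            (forall x, x \in Si -> g x \in C i t) &
            unimax Si g],
        (* (4) each set in migration recolours one object *)
        (forall k, st1 k = Migration -> recolor_one (sets' k) col1 fcol1 col') /\
        (forall x, ~ (exists k, st1 k = Migration /\ x \in sets' k) ->
                   col' x = col1 x) &
        c' = Config ell' sets' st' col' fcol1].

Inductive reachable : config -> Prop :=
| reach_init ell0 col0 fcol0 :
    reachable (Config ell0 (fun _ => [::]) (fun _ => Empty) col0 fcol0)
| reach_step c s c' : reachable c -> insert_step c s c' -> reachable c'.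

End Unimax.

From mathcomp Require Import all_boot.
From mathcomp Require Import zify.
Set Implicit Arguments. Unset Strict Implicit. Unset Printing Implicit Defensive.

(* Potential argument.  Let S_k be in migration and let m be the number of its
   objects whose colour is not yet final.  When S_k is created, S_0 .. S_(k-1)
   are empty and m < 2^k, because the new object gets its final colour at once.
   Every later insertion adds exactly one object to S_0 .. S_(k-1) and recolours
   one object of S_k, so m + |S_0| + ... + |S_(k-1)| never increases and stays
   below 2^k.  When S_0 .. S_(k-1) are all nonempty they contain 2^k - 1
   objects, so m = 0, and S_k has been marked full. *)

Section Colours.
Variable T : eqType.

Definition miscolored (col fcol : T -> nat) (X : seq T) : nat :=
  count (fun x => col x != fcol x) X.

Lemma miscolored_gt0 (col fcol : T -> nat) (X : seq T) :
  (0 < miscolored col fcol X) = ~~ all (fun x => col x == fcol x) X.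
Proof. by rewrite -has_count -has_predC. Qed.

Lemma miscolored_recolor_one (X : seq T) (col fcol col' : T -> nat) :
  recolor_one X col fcol col' ->
  miscolored col' fcol X <= (miscolored col fcol X).-1.
Proof.
case=> [[col_final col'_col] | [x [xX x_wrong _ x_fixed others_kept]]].
  have -> : miscolored col' fcol X = miscolored col fcol X.
    by apply: eq_in_count => y /col'_col /= ->.
  suff -> : miscolored col fcol X = 0 by [].
  by rewrite -(count_pred0 X); apply: eq_in_count => y /col_final /= ->; rewrite eqxx.
rewrite /miscolored; set wrong := fun y => col y != fcol y.
have -> : count (fun y => col' y != fcol y) X = count (predD1 wrong x) X.
  apply: eq_in_count => y yX /=; case: (eqVneq y x) => [->|yx]; first by rewrite x_fixed eqxx.
  by rewrite others_kept //; apply/eqP.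
have := count_predUI (pred1 x) (predD1 wrong x) X.
have -> : count (predU (pred1 x) (predD1 wrong x)) X = count wrong X.
  by apply: eq_count => y /=; case: (eqVneq y x) => // ->; rewrite /wrong (introN eqP x_wrong).
have -> : count (predI (pred1 x) (predD1 wrong x)) X = 0.
  by rewrite -(count_pred0 X); apply: eq_count => y /=; case: eqVneq.
have : 0 < count_mem x X by rewrite -has_count; apply/hasP; exists x => //=.
lia.
Qed.

End Colours.

Section Invariant.
Variable T : eqType.

Definition lower_size (sets : nat -> seq T) (k : nat) : nat :=
  size (flatten [seq sets j | j <- iota 0 k]).

Lemma lower_sizeS (sets : nat -> seq T) k :
  lower_size sets k.+1 = lower_size sets k + size (sets k).
Proof. by rewrite /lower_size -addn1 iotaD map_cat flatten_cat size_cat /= cats0. Qed.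

Record invariant (c : config T) : Prop := Invariant {
  size_sets : forall k, size (sets c k) = if state c k is Empty then 0 else 2 ^ k;
  sets_beyond_ell : forall k, ell c < k -> sets c k = [::];
  sets_disjoint : forall k m x, x \in sets c k -> x \in sets c m -> k = m;
  migration_progress : forall k, state c k = Migration ->
    0 < miscolored (col c) (fcol c) (sets c k) /\
    miscolored (col c) (fcol c) (sets c k) + lower_size (sets c) k < 2 ^ k }.

Lemma invariant_init ell0 (col0 fcol0 : T -> nat) :
  invariant (Config ell0 (fun _ => [::]) (fun _ => Empty) col0 fcol0).
Proof. by []. Qed.

Lemma lower_size_nonempty (c : config T) j : invariant c ->
  (forall m, m < j -> state c m <> Empty) -> (lower_size (sets c) j).+1 = 2 ^ j.
Proof.
move=> inv_c; elim: j => [//|j IH] nonempty.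
have nonempty_j : state c j <> Empty by apply: nonempty.
have size_j : size (sets c j) = 2 ^ j by rewrite size_sets //; case: (state c j) nonempty_j.
rewrite lower_sizeS size_j -addSn IH ?expnS ?mul2n ?addnn // => m hm.
by apply: nonempty; apply: ltnW.
Qed.

Lemma not_in_S_sets (c : config T) s k : invariant c -> ~ in_S c s -> s \notin sets c k.
Proof.
move=> inv_c s_new; case: (leqP k (ell c)) => hk; last by rewrite sets_beyond_ell.
by apply/negP => sk; apply: s_new; exists k.
Qed.

End Invariant.

Section Insertion.
Variable T : eqType.

Definition merged (c : config T) (s : T) (i : nat) : seq T :=
  s :: flatten [seq sets c j | j <- iota 0 i].

Definition merged_sets (c : config T) (s : T) (i j : nat) : seq T :=
  if j < i then [::] else if j == i then merged c s i
  else if j <= ell c then sets c j else [::].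

Definition merged_state (c : config T) (i j : nat) : status :=
  if j < i then Empty else if j == i then Migration
  else if j <= ell c then state c j else Empty.

(* Spelled out constructor by constructor, to be convertible with the
   catch-all match of [insert_step]. *)
Definition settle (col fcol : T -> nat) (X : seq T) (st : status) : status :=
  match st with
  | Empty => Empty
  | Full => Full
  | Migration => if all (fun x => col x == fcol x) X then Full else Migration
  end.

Variables (c : config T) (s : T) (i ell' : nat) (col1 fcol1 col' : T -> nat).
Hypotheses (inv_c : invariant c) (s_new : forall k, s \notin sets c k)
  (first_empty_i : first_empty c i) (i_le_ell' : i <= ell') (ell_le_ell' : ell c <= ell')
  (col1_s : col1 s = fcol1 s) (col1_old : forall x, x != s -> col1 x = col c x)
  (fcol1_old : forall x, x \notin merged c s i -> fcol1 x = fcol c x)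
  (recolor : forall k, merged_state c i k = Migration ->
     recolor_one (merged_sets c s i k) col1 fcol1 col').

Let new_state k := settle col' fcol1 (merged_sets c s i k) (merged_state c i k).

Lemma sets_i_nil : sets c i = [::].
Proof.
have [_ empty_i _] := first_empty_i.
case: (leqP i (ell c)) => h; last by rewrite sets_beyond_ell.
by apply/size0nil; rewrite size_sets // empty_i.
Qed.

Lemma merged_sets_below k : k < i -> merged_sets c s i k = [::].
Proof. by rewrite /merged_sets => ->. Qed.

Lemma merged_sets_at : merged_sets c s i i = merged c s i.
Proof. by rewrite /merged_sets ltnn eqxx. Qed.

Lemma merged_sets_above k : i < k -> merged_sets c s i k = sets c k.
Proof.
move=> hk; rewrite /merged_sets ltnNge (ltnW hk) gtn_eqF //=.
by case: leqP => // /sets_beyond_ell ->.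
Qed.

Lemma merged_state_above k : i < k -> merged_state c i k = state c k.
Proof.
move=> hk; rewrite /merged_state ltnNge (ltnW hk) gtn_eqF //=.
case: leqP => // /(sets_beyond_ell inv_c) sets_k.
by have := size_sets inv_c k; rewrite sets_k; case: (state c k) => //= /eqP; rewrite eq_sym expn_eq0.
Qed.

Lemma mem_merged x : x \in merged c s i -> x = s \/ exists2 j, j < i & x \in sets c j.
Proof.
rewrite inE => /orP [/eqP ->|]; first by left.
move/flattenP => [X /mapP [j]]; rewrite mem_iota add0n => /andP [_ hj] -> xX.
by right; exists j.
Qed.

Lemma notin_merged k x : i < k -> x \in sets c k -> x \notin merged c s i.
Proof.
move=> hk xk; apply/negP => /mem_merged [xs|[j hj xj]].
  by move: (s_new k); rewrite -xs xk.
by have := sets_disjoint inv_c xk xj; lia.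
Qed.

Lemma mem_merged_sets k x : x \in merged_sets c s i k ->
  (k = i /\ x \in merged c s i) \/ (i < k /\ x \in sets c k).
Proof.
case: (ltngtP k i) => [/merged_sets_below -> //|hk|->]; last by rewrite merged_sets_at; left.
by rewrite merged_sets_above //; right.
Qed.

Lemma size_merged : size (merged c s i) = 2 ^ i.
Proof.
have [_ _ nonempty] := first_empty_i.
by rewrite -(lower_size_nonempty inv_c nonempty).
Qed.

Lemma lower_size_merged k :
  lower_size (merged_sets c s i) k = if k <= i then 0 else (lower_size (sets c) k).+1.
Proof.
elim: k => [//|k IH]; rewrite !lower_sizeS IH.
case: (ltngtP k i) => [hk|hk|->].
- by rewrite merged_sets_below.
- by rewrite merged_sets_above // addSn.
- by rewrite merged_sets_at sets_i_nil addn0.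
Qed.

Lemma miscolored_merged : miscolored col1 fcol1 (merged c s i) < 2 ^ i.
Proof.
by rewrite -size_merged /miscolored /= col1_s eqxx add0n ltnS count_size.
Qed.

Lemma miscolored_old k : i < k ->
  miscolored col1 fcol1 (sets c k) = miscolored (col c) (fcol c) (sets c k).
Proof.
move=> hk; apply: eq_in_count => x xk.
rewrite col1_old ?fcol1_old ?(notin_merged hk) //.
by apply: contraNneq (s_new k) => <-.
Qed.

Lemma invariant_insert :
  invariant (Config ell' (merged_sets c s i) new_state col' fcol1).
Proof.
split=> /= [k | k hk | k m x /mem_merged_sets hk /mem_merged_sets hm | k].
- rewrite /new_state; case: (ltngtP k i) => [hk|hk|->].
  + by rewrite merged_sets_below // /merged_state hk.
  + rewrite merged_sets_above // merged_state_above // size_sets //.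
    by case: (state c k) => //=; case: ifP.
  + by rewrite merged_sets_at size_merged /merged_state ltnn eqxx /=; case: ifP.
- by rewrite merged_sets_above ?sets_beyond_ell //; lia.
- case: hk hm => [[-> xS] | [hk xk]] [[-> xS'] | [hm xm]] //.
  + by rewrite (negPf (notin_merged hm xm)) in xS.
  + by rewrite (negPf (notin_merged hk xk)) in xS'.
  + exact: (sets_disjoint inv_c xk xm).
- rewrite /new_state /settle; case E: (merged_state c i k) => //.
  case: ifP => // /negbT; rewrite -miscolored_gt0 => pos _; split => //.
  have := miscolored_recolor_one (recolor E).
  rewrite lower_size_merged; case: (ltngtP k i) => [hk|hk|->].
  + by move: E; rewrite /merged_state hk.
  + move: E; rewrite merged_state_above // merged_sets_above // miscolored_old // => Mk.
    by have := migration_progress inv_c Mk; lia.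
  + by rewrite merged_sets_at; have := miscolored_merged; lia.
Qed.

End Insertion.

Lemma insert_step_invariant (T : eqType) (Q : Type) (rel : Q -> T -> bool)
  (C : nat -> nat -> seq nat) (c c' : config T) (s : T) :
  invariant c -> insert_step rel C c s c' -> invariant c'.
Proof.
move=> inv_c [s_new [i [ell' [t [g [col' [fe [ell_eq ell_new] _ [recolor _] ->]]]]]]].
have [i_le _ _] := fe.
apply: (@invariant_insert T c s i ell' (fun x => if x == s then g s else col c x)
  (fun x => if x \in merged c s i then g x else fcol c x) col' inv_c _ fe _ _ _ _ _ recolor).
- by move=> k; apply: not_in_S_sets.
- by case: (leqP i (ell c)) => h; [rewrite ell_eq | apply: ell_new; lia].
- by case: (leqP i (ell c)) => h; [rewrite ell_eq | have := ell_new; lia].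
- by rewrite eqxx mem_head.
- by move=> x /negPf ->.
- by move=> x /negPf ->.
Qed.

Lemma reachable_invariant (T : eqType) (Q : Type) (rel : Q -> T -> bool)
  (C : nat -> nat -> seq nat) (c : config T) : reachable rel C c -> invariant c.
Proof.
elim=> [ell0 col0 fcol0 | c0 s c1 _ inv_c0 step]; first exact: invariant_init.
exact: insert_step_invariant inv_c0 step.
Qed.

Theorem mainTheorem8 (T : eqType) (Q : Type) (rel : Q -> T -> bool)
  (gamma : nat -> nat)
  (gamma_mono : forall m n, m <= n -> gamma m <= gamma n)
  (gamma_ok : gamma_um_bound rel gamma)
  (C : nat -> nat -> seq nat)
  (C_ok : forall i t, uniq (C i t) /\ size (C i t) = gamma (2 ^ i))
  (c c' : config T) (s : T) (i : nat) :
  reachable rel C c -> insert_step rel C c s c' -> first_empty c i ->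
  forall j, j < i -> state c j = Full.
Proof.
move=> /reachable_invariant inv_c _ [_ _ nonempty] j hj.
case E: (state c j) => //; first by have := nonempty j hj; rewrite E.
have [pos bound] := migration_progress inv_c E.
have := lower_size_nonempty inv_c (fun m hm => nonempty m (ltn_trans hm hj)).
lia.
Qed.
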